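(* For all integers $m\ge1$ and $n,h,r\ge0$, $$\mathcal D_{m,r}(n+h,u)=\sum_{k=0}^n\sum_{j=0}^h\binom nk\,\mathcal D_{m,r}(k,u)\,W_{m,r}(h,j)\,u^j\,j^{\,n-k}m^{\,n-k},$$ with the convention $0^0=1$.
   Context: For integers $m\ge1$, $n,k,r\ge0$, $W_{m,r}(n,k)$ denotes the $r$-Whitney number of the second kind, defined by $\sum_{n\ge k}W_{m,r}(n,k)\frac{z^n}{n!}=\frac{e^{rz}}{k!}\left(\frac{e^{mz}-1}{m}\right)^k$ (and $W_{m,r}(n,k)=0$ if $k<0$ or $k>n$). The $r$-Dowling polynomial is $\mathcal D_{m,r}(n,u):=\sum_{k=0}^nW_{m,r}(n,k)u^k$. *)

From HB Require Import structures.
From mathcomp Require Import all_boot all_order all_algebra.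
Set Implicit Arguments. Unset Strict Implicit. Unset Printing Implicit Defensive.
Import Order.TTheory GRing.Theory Num.Theory.
Local Open Scope ring_scope.

(* The defining EGF  e^{rz}/k! ((e^{mz}-1)/m)^k  expands (binomial theorem)
   to  1/(k! m^k) sum_{j=0}^k (-1)^(k-j) C(k,j) e^{(mj+r)z}; extracting the
   coefficient of z^n/n! gives the formula below. *)
Definition Whit (m r n k : nat) : rat :=
  if (k <= n)%N then
    (\sum_(j < k.+1) (-1) ^+ (k - j) * ('C(k, j))%:R * ((m * j + r) ^ n)%N%:R)
      / ((m ^ k)%N%:R * (k`!)%:R)
  else 0.

Definition Dowling (m r n : nat) : {poly rat} :=
  \sum_(k < n.+1) Whit m r n k *: 'X^k.

From HB Require Import structures.
From mathcomp Require Import all_boot all_order all_algebra.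
From mathcomp Require Import ring.
Import Order.TTheory GRing.Theory Num.Theory.
Local Open Scope ring_scope.

(* The recurrence W(n+1,k+1) = W(n,k) + (m(k+1)+r) W(n,k+1) says that
   D(n+1,u) = T D(n,u) for the linear operator T p = (u + r) p + m u p', hence
   D(n+h,u) = T^n D(h,u).  On monomials T (p u^j) = ((T + m j) p) u^j, and as T
   commutes with the scalar m j, the binomial theorem expands (T + m j)^n 1 into
   sum_k C(n,k) (m j)^(n-k) T^k 1 = sum_k C(n,k) (m j)^(n-k) D(k,u). *)

Section IterLinear.
Variables (R : pzSemiRingType) (V : lSemiModType R) (f : {linear V -> V}).

Lemma iter_linear_sum n (I : Type) (s : seq I) (P : pred I) (F : I -> V) :
  iter n f (\sum_(i <- s | P i) F i) = \sum_(i <- s | P i) iter n f (F i).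
Proof. by elim: n => //= n ->; rewrite linear_sum. Qed.

Lemma iter_linearZ n a v : iter n f (a *: v) = a *: iter n f v.
Proof. by elim: n => //= n ->; rewrite linearZZ. Qed.

Lemma iter_linear_add_scale n c v :
  iter n (fun w => f w + c *: w) v =
  \sum_(k < n.+1) ('C(n, k)%:R * c ^+ (n - k)) *: iter k f v.
Proof.
elim: n => [|n IH]; first by rewrite big_ord1 mul1r scale1r.
rewrite iterS IH linear_sum scaler_sumr.
under eq_bigr do rewrite linearZZ.
under [X in _ + X]eq_bigr do rewrite scalerA.
rewrite [X in _ + X]big_ord_recl [RHS]big_ord_recl.
under [X in _ = _ + X]eq_bigr do rewrite binS natrD mulrDl scalerDl.
rewrite big_split [X in _ = _ + (X + _)]big_ord_recr /= (bin_small (ltnSn n)).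
rewrite mulr0n mul0r scale0r addr0.
rewrite addrC [RHS]addrA; congr (_ + _ + _).
- by rewrite !bin0 !subn0 !mul1r exprS.
- apply: eq_bigr => k _; rewrite /bump /= add1n subSS.
  by rewrite mulrA (commr_nat c) -mulrA -exprS subnSK.
Qed.

End IterLinear.

Section DowlingStep.
Variables (R : comNzRingType) (m r : R).

Definition dowling_step (p : {poly R}) : {poly R} :=
  p * ('X + r%:P) + m *: ('X * p^`()).

Fact dowling_step_is_semilinear : semilinear dowling_step.
Proof.
by split=> [a p | p q]; rewrite /dowling_step ?derivZ ?derivD -!mul_polyC; ring.
Qed.

HB.instance Definition _ := GRing.isSemilinear.Build R {poly R} {poly R} _
  dowling_step dowling_step_is_semilinear.

Lemma dowling_step_mulXn p j :
  dowling_step (p * 'X^j) = (dowling_step p + (m *+ j) *: p) * 'X^j.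
Proof.
rewrite /dowling_step derivM derivXn -!(mul_polyC m) -mul_polyC.
case: j => [|j]; first by rewrite !mulr0n polyC0; ring.
by rewrite polyCMn exprS; ring.
Qed.

Lemma iter_dowling_step_mulXn n p j :
  iter n dowling_step (p * 'X^j) =
  iter n (fun q => dowling_step q + (m *+ j) *: q) p * 'X^j.
Proof. by elim: n => //= n ->; rewrite dowling_step_mulXn. Qed.

End DowlingStep.

Arguments dowling_step {R} m r p.

Section WhitneyNumerator.
Variables (R : comNzRingType) (m r : nat).

Definition whit_numer (n k : nat) : R :=
  \sum_(j < k.+1) (-1) ^+ (k - j) * ('C(k, j))%:R * ((m * j + r) ^ n)%N%:R.

Lemma whit_numer0 n : whit_numer n 0 = (r ^ n)%:R.
Proof. by rewrite /whit_numer big_ord1 muln0 add0n expr0 !mul1r. Qed.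

Lemma whit_numer0S k : whit_numer 0 k.+1 = 0.
Proof.
have := exprDn (-1 : R) 1 k.+1; rewrite addNr expr0n /= => binomial_sum.
rewrite [RHS]binomial_sum.
by apply: eq_bigr => j _; rewrite expr1n mulr1 expn0 mulr1 mulr_natr.
Qed.

Lemma whit_numer_scaled n k :
  (m * k.+1)%:R * whit_numer n k =
  \sum_(j < k.+2) (-1) ^+ (k - j) * (m * (k.+1 - j) * 'C(k.+1, j))%:R
                  * ((m * j + r) ^ n)%:R.
Proof.
rewrite big_ord_recr /= subnn muln0 mul0n mulr0 mul0r addr0 mulr_sumr.
by apply: eq_bigr => j _; rewrite -mulnA -mul_bin_down /=; ring.
Qed.

Lemma whit_numerSS n k :
  whit_numer n.+1 k.+1 =
  (m * k.+1 + r)%:R * whit_numer n k.+1 + (m * k.+1)%:R * whit_numer n k.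
Proof.
rewrite whit_numer_scaled /whit_numer mulr_sumr -big_split.
apply: eq_bigr => -[j /= lt_jk2] _.
have -> : (m * k.+1 + r = m * j + r + m * (k.+1 - j))%N.
  by rewrite mulnBr addnAC subnKC // leq_mul2l -ltnS lt_jk2 orbT.
move: lt_jk2; rewrite ltnS leq_eqVlt => /predU1P [-> | lt_jk1].
  by rewrite subnn muln0 expnS; ring.
by rewrite subSn // expnS exprS; ring.
Qed.

Lemma whit_numer_eq0 n k : (n < k)%N -> whit_numer n k = 0.
Proof.
elim: n k => [|n IH] [|k] // lt_nk; first exact: whit_numer0S.
by rewrite whit_numerSS !IH ?mulr0 ?addr0 // ltnW.
Qed.

End WhitneyNumerator.

Arguments whit_numer {R} m r n k.

Lemma WhitE m r n k :
  Whit m r n k = whit_numer m r n k / ((m ^ k)%:R * k`!%:R).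
Proof.
by rewrite /Whit; case: leqP => // lt_nk; rewrite whit_numer_eq0 // mul0r.
Qed.

Lemma WhitS0 m r n : Whit m r n.+1 0 = r%:R * Whit m r n 0.
Proof. by rewrite !WhitE !whit_numer0 expnS natrM mulrA. Qed.

Lemma WhitSS m r n k : (0 < m)%N ->
  Whit m r n.+1 k.+1 = Whit m r n k + (m * k.+1 + r)%:R * Whit m r n k.+1.
Proof.
move=> m_gt0; rewrite !WhitE whit_numerSS expnS factS !natrM.
by field; rewrite -(natrD _ 1 k) !pnatr_eq0 -!lt0n fact_gt0 expn_gt0 m_gt0.
Qed.

Lemma Dowling_poly m r n : Dowling m r n = \poly_(k < n.+1) Whit m r n k.
Proof. by rewrite poly_def. Qed.

Lemma coef_Dowling m r n k : (Dowling m r n)`_k = Whit m r n k.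
Proof.
rewrite Dowling_poly coef_poly.
by case: ltnP => // lt_nk; rewrite /Whit leqNgt lt_nk.
Qed.

Lemma Dowling0 m r : Dowling m r 0 = 1.
Proof.
rewrite /Dowling big_ord1 WhitE whit_numer0 /=.
by rewrite !expn0 fact0 !mulr1n !mulr1 scale1r.
Qed.

Lemma DowlingS m r n : (0 < m)%N ->
  Dowling m r n.+1 = dowling_step m%:R r%:R (Dowling m r n).
Proof.
move=> m_gt0; apply/polyP => k.
rewrite /dowling_step mulrDr !coefD coefMX coefMC coefZ coefXM.
case: k => [|k] /=; rewrite !coef_Dowling.
  by rewrite WhitS0 add0r mulr0 addr0 mulrC.
by rewrite coef_deriv coef_Dowling WhitSS // -mulr_natr natrD natrM; ring.
Qed.

Lemma Dowling_addn m r n h : (0 < m)%N ->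
  Dowling m r (n + h) = iter n (dowling_step m%:R r%:R) (Dowling m r h).
Proof. by move=> m_gt0; elim: n => //= n IH; rewrite addSn DowlingS // IH. Qed.

Lemma Dowling_iter m r n : (0 < m)%N ->
  Dowling m r n = iter n (dowling_step m%:R r%:R) 1.
Proof. by move=> m_gt0; rewrite -(Dowling0 m r) -Dowling_addn // addn0. Qed.

Theorem mainTheorem5 (m n h r : nat) (hm : (0 < m)%N) :
  Dowling m r (n + h) =
  \sum_(k < n.+1) \sum_(j < h.+1)
     ('C(n, k))%:R *: (Dowling m r k *
        ((Whit m r h j * ((j ^ (n - k)) * (m ^ (n - k)))%N%:R) *: 'X^j)).
Proof.
rewrite Dowling_addn // {1}/Dowling iter_linear_sum [RHS]exchange_big /=.
apply: eq_bigr => j _.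
rewrite iter_linearZ -[X in iter _ _ X]mul1r iter_dowling_step_mulXn.
rewrite iter_linear_add_scale.
rewrite mulr_suml scaler_sumr; apply: eq_bigr => k _.
rewrite -Dowling_iter // -scalerAl -scalerAr !scalerA; congr (_ *: _).
rewrite !natrM !natrX -(mulr_natr (m%:R : rat) j) exprMn.
by rewrite mulrCA (mulrC (m%:R ^+ _)).
Qed.
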